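(* For positive integers $n, m$ with $m \le n$ define $$f(n,m) = \sum_{k=0}^{m-1} \binom{n}{k} \left(\frac{m}{n}\right)^k \left(1 - \frac{m}{n}\right)^{n-k}.$$ Then for every integer $n \geq 100$, $f(n,m)$ is an increasing function of $m$ for $1 \le m \leq 11$, i.e. $f(n,1) < f(n,2) < \cdots < f(n,11)$.
   Context: $f(n,m)$ is the probability that a binomial random variable with $n$ trials and success probability $m/n$ is at most $m-1$. *)

From mathcomp Require Import all_boot all_order all_algebra.
Set Implicit Arguments. Unset Strict Implicit. Unset Printing Implicit Defensive.
Import Order.TTheory GRing.Theory Num.Theory.
Local Open Scope ring_scope.

Definition f (n m : nat) : rat :=
  \sum_(0 <= k < m) ('C(n, k))%:R * ((m%:R / n%:R) ^+ k)
                      * ((1 - m%:R / n%:R) ^+ (n - k)).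

From mathcomp Require Import all_boot all_order all_algebra.
From mathcomp Require Import ring lra zify.
Import Order.TTheory GRing.Theory Num.Theory.
Local Open Scope ring_scope.

(* Put N = n - m. Since 1 - m/n = N/n, f n m = (N/n)^n * psum n m with
   psum n m = sum_(k < m) C(n, k) (m/N)^k, while f n m.+1 = (N/n)^n (1 - 1/N)^n psum n m.+1;
   as n = N + m, it suffices that psum n m < (1 - 1/N)^(N + m) psum n m.+1.
   Because (1 + 1/M)^(2M + 1) decreases to e^2, (1 - 1/N)^(2N - 1) >= c^2 for
   c = 0.36787 < 1/e, and h(N) = 1 - 1/(2N) - 1/(2N^2) <= sqrt(1 - 1/N); hence
   (1 - 1/N)^(N + m) >= c (1 - 1/N)^m h(N).  For each m <= 10 the remaining
   inequality is between rational functions of n: the difference of its two sides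
   is a polynomial in n - 100 with nonnegative coefficients over a positive
   denominator. *)

(* [binr x k] is x choose k as a polynomial in x, which turns C(n, k) for a
   symbolic n into a rational function that [field] can manipulate. *)
Fixpoint binr {R : numFieldType} (x : R) (k : nat) : R :=
  if k is k'.+1 then binr x k' * (x - k'%:R) / k%:R else 1.

Lemma binr0 (R : numFieldType) (x : R) : binr x 0 = 1. Proof. by []. Qed.

Lemma binrS (R : numFieldType) (x : R) k :
  binr x k.+1 = binr x k * (x - k%:R) / k.+1%:R.
Proof. by []. Qed.

Lemma natr_binr (R : numFieldType) (n k : nat) :
  (k <= n)%N -> ('C(n, k))%:R = binr (n%:R : R) k.
Proof.
elim: k => [|k IHk] le_kn; first by rewrite bin0.
rewrite binrS -IHk ?(ltnW le_kn) //.
have := congr1 (GRing.natmul (1 : R)) (mul_bin_left n k).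
rewrite !natrM natrB ?(ltnW le_kn) // => binS_eq.
by rewrite [_ * (_ - _)]mulrC -binS_eq mulrAC divff ?mul1r // pnatr_eq0.
Qed.

Lemma addr_mul_gt0 (R : realDomainType) (a b t : R) :
  0 < a -> 0 <= b -> 0 <= t -> 0 < a + t * b.
Proof. by move=> a_gt0 b_ge0 t_ge0; rewrite ltr_wpDr ?mulr_ge0. Qed.

Lemma addr_mul_ge0 (R : realDomainType) (a b t : R) :
  0 <= a -> 0 <= b -> 0 <= t -> 0 <= a + t * b.
Proof. by move=> a_ge0 b_ge0 t_ge0; rewrite addr_ge0 ?mulr_ge0. Qed.

Ltac horner_pos :=
  repeat match goal with
  | |- is_true (0 < _ + _ * _) => apply: addr_mul_gt0
  | |- is_true (0 <= _ + _ * _) => apply: addr_mul_ge0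
  end; try lra.

Section ExponentialBounds.

Context {R : realFieldType}.

Lemma cubic_le_exprD1 (x : R) (k : nat) : 0 <= x ->
  1 + k%:R * x + ('C(k, 2))%:R * x ^+ 2 + ('C(k, 3))%:R * x ^+ 3 <= (1 + x) ^+ k.
Proof.
move=> x_ge0; elim: k => [|k IHk]; first by rewrite !bin0n /= !mulr0n; lra.
rewrite !binS bin1 !natrD -natr1.
set a := ('C(k, 2))%:R; set b := ('C(k, 3))%:R.
have b_ge0 : 0 <= b by apply: ler0n.
have bx4_ge0 : 0 <= b * x ^+ 4 by rewrite mulr_ge0 ?exprn_ge0.
apply: le_trans (_ : (1 + x) * (1 + k%:R * x + a * x ^+ 2 + b * x ^+ 3) <= _).
  by rewrite -subr_ge0 (_ : _ - _ = b * x ^+ 4) //; ring.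
by rewrite [(1 + x) ^+ k.+1]exprS ler_wpM2l //; lra.
Qed.

Definition e2_upper (M : nat) : R := (M.+1%:R / M%:R) ^+ (2 * M).+1.

Lemma e2_upperS_le (M : nat) : (1 <= M)%N -> e2_upper M.+1 <= e2_upper M.
Proof.
move=> M_ge1; rewrite /e2_upper.
have M_ge1R : 1 <= M%:R :> R by rewrite ler1n.
have -> : (2 * M.+1).+1 = ((2 * M).+1 + 2)%N by lia.
set K := (2 * M).+1; set q : R := M.+2%:R / M.+1%:R.
set x : R := 1 / (M%:R * (M%:R + 2)).
have -> : M.+1%:R / M%:R = q * (1 + x) by rewrite /q /x -!natr1; field; lra.
rewrite exprD [X in _ <= X]exprMn ler_wpM2l ?exprn_ge0 ?divr_ge0 //.
have x_ge0 : 0 <= x by rewrite divr_ge0 // mulr_ge0 //; lra.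
apply: le_trans _ (cubic_le_exprD1 x K x_ge0).
rewrite !natr_binr ?/K; try lia.
rewrite !binrS binr0 /q /x -!natr1 natrM -subr_ge0.
rewrite (_ : _ - _ = (78 + (M%:R - 1) * (220 + (M%:R - 1) * (220 + (M%:R - 1)
      * (96 + (M%:R - 1) * (20 + (M%:R - 1) * 2)))))
   / (6 * (M%:R * (M%:R + 2)) ^+ 3 * (M%:R + 1) ^+ 2)); last by field; lra.
by rewrite divr_ge0 ?mulr_ge0 ?exprn_ge0 //; [horner_pos | lra..].
Qed.

Lemma e2_upper_le (M : nat) : (89 <= M)%N -> e2_upper M <= e2_upper 89.
Proof.
move=> /subnKC <-; elim: (M - 89)%N => [|d IHd]; first by rewrite addn0.
by rewrite addnS (le_trans _ IHd) // e2_upperS_le.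
Qed.

Definition econst : R := (36 * 1000 + 787) / (100 * 1000).

Lemma econst_ge0 : 0 <= econst.
Proof. rewrite /econst; lra. Qed.

Lemma econst_sqr_e2_upper : econst ^+ 2 * e2_upper 89 <= 1.
Proof. rewrite /econst /e2_upper; lra. Qed.

Lemma sqrt1B_taylor_le (u : R) : 0 < u -> u <= 1 / 90 ->
  0 <= 1 - u / 2 - u ^+ 2 / 2 /\ (1 - u / 2 - u ^+ 2 / 2) ^+ 2 <= 1 - u.
Proof.
move=> u_gt0 u_small.
have u2_ge0 : 0 <= u ^+ 2 by rewrite exprn_ge0 // ltW.
have u2_le : u * u <= u * (1 / 90) by rewrite ler_wpM2l // ltW.
have u3_le : u ^+ 2 * u <= u ^+ 2 * (1 / 90) by rewrite ler_wpM2l.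
have u4_le : u ^+ 2 * u ^+ 2 <= u ^+ 2 * (1 / 90).
  by rewrite ler_wpM2l // expr2; lra.
split; first by rewrite expr2; lra.
have -> : (1 - u / 2 - u ^+ 2 / 2) ^+ 2
    = 1 - u - 3 / 4 * u ^+ 2 + u ^+ 2 * u / 2 + u ^+ 2 * u ^+ 2 / 4 by field.
lra.
Qed.

Lemma expr_ge_of_sqr (M k : nat) {c w s : R} : 0 <= c -> 0 <= w -> 0 <= s ->
  s ^+ 2 <= w -> c ^+ 2 <= w ^+ (2 * M).+1 -> c * w ^+ k * s <= w ^+ (M.+1 + k).
Proof.
move=> c_ge0 w_ge0 s_ge0 s2_le c2_le.
have wk_ge0 : 0 <= w ^+ k := exprn_ge0 _ w_ge0.
rewrite -ler_sqr ?nnegrE ?exprn_ge0 ?mulr_ge0 //.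
have -> : (w ^+ (M.+1 + k)) ^+ 2 = w ^+ (2 * M).+1 * (w ^+ k) ^+ 2 * w.
  by rewrite -!exprM -!exprD -exprSr; congr (_ ^+ _); lia.
by rewrite !exprMn ler_pM ?mulr_ge0 ?exprn_ge0 // ler_wpM2r ?exprn_ge0.
Qed.

Definition sqrt1B_approx (y : R) : R := 1 - 1 / (2 * y) - 1 / (2 * y ^+ 2).

Lemma expr1B_inv_ge (N k : nat) : (90 <= N)%N ->
  econst * (1 - 1 / N%:R) ^+ k * sqrt1B_approx N%:R <= (1 - 1 / N%:R) ^+ (N + k).
Proof.
case: N => [|M] N_ge90; first by [].
have M_ge89 : 89 <= M%:R :> R by rewrite (ler_nat _ 89).
set u : R := 1 / M.+1%:R.
have u_gt0 : 0 < u by rewrite /u -natr1 divr_gt0 //; lra.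
have u_small : u <= 1 / 90.
  by rewrite /u -natr1 ler_pdivrMr; [rewrite mul1r mulrC -ler_pdivrMr; lra | lra].
have w_ge0 : 0 <= 1 - u by lra.
have -> : sqrt1B_approx M.+1%:R = 1 - u / 2 - u ^+ 2 / 2.
  by rewrite /sqrt1B_approx /u -natr1; field; lra.
have [s_ge0 s2_le] := @sqrt1B_taylor_le u u_gt0 u_small.
apply: (expr_ge_of_sqr M k econst_ge0 w_ge0 s_ge0 s2_le).
have e2_upper_w : e2_upper M * (1 - u) ^+ (2 * M).+1 = 1.
  by rewrite /e2_upper -exprMn /u -natr1 (_ : _ * _ = 1) ?expr1n //; field; lra.
apply: le_trans (_ : econst ^+ 2 * (e2_upper M * (1 - u) ^+ (2 * M).+1) <= _).
  by rewrite e2_upper_w mulr1.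
rewrite mulrA -[X in _ <= X]mul1r ler_wpM2r ?exprn_ge0 //.
apply: le_trans _ econst_sqr_e2_upper; rewrite ler_wpM2l ?exprn_ge0 ?econst_ge0 //.
by rewrite e2_upper_le //; lia.
Qed.

End ExponentialBounds.

Definition psum (n m : nat) : rat :=
  \sum_(0 <= k < m) ('C(n, k))%:R * (m%:R / (n - m)%:R) ^+ k.

(* The difference of the two sides equals [p / (D * (n - m)^(m + 2))], with [p] a
   polynomial in [n - 100] with nonnegative coefficients.  Large constants are
   written in base 1000, as ring numerals are built from unary naturals. *)
Tactic Notation "psum_certificate" uconstr(p) uconstr(D) :=
  match goal with
  | n_ge100 : is_true (100 <= ?n)%N |- is_true (psum ?n ?m < _) =>
    have n_ge100R : 100 <= n%:R :> rat by [rewrite (ler_nat _ 100)];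
    rewrite /psum !big_mkord !big_ord_recr !big_ord0 /= !natrB ?natr_binr; try lia;
    rewrite !binrS binr0 -subr_gt0 (_ : _ - _ = p / (D * (n%:R - m%:R) ^+ m.+2));
    [ apply: divr_gt0; [horner_pos | apply: mulr_gt0; [lra | apply: exprn_gt0; lra]]
    | rewrite /econst /sqrt1B_approx; field; lra ]
  end.

Lemma psum_lt_scaled_succ1 (n : nat) : (100 <= n)%N ->
  psum n 1 < econst * (1 - 1 / (n - 1)%:R) ^+ 1 * sqrt1B_approx (n - 1)%:R * psum n 2.
Proof.
move=> n_ge100; psum_certificate
  ((((19 * 1000 + 731) * 1000 + 382) * 1000 + 52)
    + (n%:R - 100) * (((601 * 1000 + 857) * 1000 + 992)
    + (n%:R - 100) * (((6 * 1000 + 117) * 1000 + 647)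
    + (n%:R - 100) * (20 * 1000 + 722))))
  (200 * 1000).
Qed.

Lemma psum_lt_scaled_succ2 (n : nat) : (100 <= n)%N ->
  psum n 2 < econst * (1 - 1 / (n - 2)%:R) ^+ 2 * sqrt1B_approx (n - 2)%:R * psum n 3.
Proof.
move=> n_ge100; psum_certificate
  (((((4 * 1000 + 584) * 1000 + 685) * 1000 + 186) * 1000 + 394)
    + (n%:R - 100) * ((((188 * 1000 + 231) * 1000 + 414) * 1000 + 269)
    + (n%:R - 100) * ((((2 * 1000 + 896) * 1000 + 805) * 1000 + 880)
    + (n%:R - 100) * (((19 * 1000 + 805) * 1000 + 403)
    + (n%:R - 100) * (50 * 1000 + 758)))))
  (400 * 1000).
Qed.

Lemma psum_lt_scaled_succ3 (n : nat) : (100 <= n)%N ->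
  psum n 3 < econst * (1 - 1 / (n - 3)%:R) ^+ 3 * sqrt1B_approx (n - 3)%:R * psum n 4.
Proof.
move=> n_ge100; psum_certificate
  ((((((1 * 1000 + 48) * 1000 + 427) * 1000 + 178) * 1000 + 237) * 1000 + 120)
    + (n%:R - 100) * (((((54 * 1000 + 245) * 1000 + 988) * 1000 + 746) * 1000 + 592)
    + (n%:R - 100) * (((((1 * 1000 + 122) * 1000 + 72) * 1000 + 43) * 1000 + 296)
    + (n%:R - 100) * ((((11 * 1000 + 598) * 1000 + 893) * 1000 + 432)
    + (n%:R - 100) * (((59 * 1000 + 918) * 1000 + 847)
    + (n%:R - 100) * (123 * 1000 + 754))))))
  (600 * 1000).
Qed.

Lemma psum_lt_scaled_succ4 (n : nat) : (100 <= n)%N ->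
  psum n 4 < econst * (1 - 1 / (n - 4)%:R) ^+ 4 * sqrt1B_approx (n - 4)%:R * psum n 5.
Proof.
move=> n_ge100; psum_certificate
  (((((((1 * 1000 + 443) * 1000 + 340) * 1000 + 763) * 1000 + 133) * 1000) * 1000)
    + (n%:R - 100) * ((((((90 * 1000 + 295) * 1000 + 380) * 1000 + 76) * 1000 + 868) * 1000 + 750)
    + (n%:R - 100) * ((((((2 * 1000 + 352) * 1000 + 177) * 1000 + 962) * 1000 + 433) * 1000 + 125)
    + (n%:R - 100) * (((((32 * 1000 + 659) * 1000 + 121) * 1000 + 522) * 1000 + 625)
    + (n%:R - 100) * ((((254 * 1000 + 919) * 1000 + 584) * 1000 + 325)
    + (n%:R - 100) * ((((1 * 1000 + 60) * 1000 + 602) * 1000 + 529)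
    + (n%:R - 100) * ((1 * 1000 + 837) * 1000 + 606)))))))
  ((4 * 1000 + 800) * 1000).
Qed.

Lemma psum_lt_scaled_succ5 (n : nat) : (100 <= n)%N ->
  psum n 5 < econst * (1 - 1 / (n - 5)%:R) ^+ 5 * sqrt1B_approx (n - 5)%:R * psum n 6.
Proof.
move=> n_ge100; psum_certificate
  (((((((165 * 1000 + 811) * 1000 + 395) * 1000 + 968) * 1000 + 996) * 1000 + 935) * 1000 + 680)
    + (n%:R - 100) * (((((((12 * 1000 + 190) * 1000 + 659) * 1000 + 802) * 1000 + 986) * 1000 + 917) * 1000 + 24)
    + (n%:R - 100) * ((((((383 * 1000 + 830) * 1000 + 693) * 1000 + 434) * 1000 + 629) * 1000 + 664)
    + (n%:R - 100) * ((((((6 * 1000 + 709) * 1000 + 199) * 1000 + 56) * 1000 + 136) * 1000 + 932)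
    + (n%:R - 100) * (((((70 * 1000 + 316) * 1000 + 522) * 1000 + 111) * 1000 + 830)
    + (n%:R - 100) * ((((441 * 1000 + 888) * 1000 + 126) * 1000 + 606)
    + (n%:R - 100) * ((((1 * 1000 + 541) * 1000 + 783) * 1000 + 561)
    + (n%:R - 100) * ((2 * 1000 + 304) * 1000 + 78))))))))
  ((3 * 1000) * 1000).
Qed.

Lemma psum_lt_scaled_succ6 (n : nat) : (100 <= n)%N ->
  psum n 6 < econst * (1 - 1 / (n - 6)%:R) ^+ 6 * sqrt1B_approx (n - 6)%:R * psum n 7.
Proof.
move=> n_ge100; psum_certificate
  (((((((((1 * 1000 + 521) * 1000 + 332) * 1000 + 810) * 1000 + 521) * 1000 + 504) * 1000 + 812) * 1000 + 328) * 1000 + 320)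
    + (n%:R - 100) * ((((((((128 * 1000 + 750) * 1000 + 905) * 1000 + 629) * 1000 + 637) * 1000 + 368) * 1000 + 776) * 1000 + 676)
    + (n%:R - 100) * ((((((((4 * 1000 + 763) * 1000 + 78) * 1000 + 273) * 1000 + 743) * 1000 + 671) * 1000 + 892) * 1000 + 896)
    + (n%:R - 100) * (((((((100 * 1000 + 609) * 1000 + 268) * 1000 + 531) * 1000 + 228) * 1000 + 760) * 1000 + 411)
    + (n%:R - 100) * (((((((1 * 1000 + 327) * 1000 + 197) * 1000 + 12) * 1000 + 297) * 1000 + 410) * 1000 + 906)
    + (n%:R - 100) * ((((((11 * 1000 + 196) * 1000 + 824) * 1000 + 538) * 1000 + 743) * 1000 + 274)
    + (n%:R - 100) * (((((58 * 1000 + 997) * 1000 + 56) * 1000 + 167) * 1000 + 824)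
    + (n%:R - 100) * ((((177 * 1000 + 515) * 1000 + 634) * 1000 + 39)
    + (n%:R - 100) * ((233 * 1000 + 529) * 1000 + 494)))))))))
  ((144 * 1000) * 1000).
Qed.

Lemma psum_lt_scaled_succ7 (n : nat) : (100 <= n)%N ->
  psum n 7 < econst * (1 - 1 / (n - 7)%:R) ^+ 7 * sqrt1B_approx (n - 7)%:R * psum n 8.
Proof.
move=> n_ge100; psum_certificate
  (((((((((130 * 1000 + 318) * 1000 + 204) * 1000 + 982) * 1000 + 461) * 1000 + 443) * 1000 + 412) * 1000 + 738) * 1000 + 560)
    + (n%:R - 100) * (((((((((12 * 1000 + 496) * 1000 + 756) * 1000 + 132) * 1000 + 661) * 1000 + 375) * 1000 + 229) * 1000 + 778) * 1000 + 608)
    + (n%:R - 100) * ((((((((532 * 1000 + 102) * 1000 + 566) * 1000 + 234) * 1000 + 458) * 1000 + 874) * 1000 + 773) * 1000 + 888)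
    + (n%:R - 100) * ((((((((13 * 1000 + 204) * 1000 + 425) * 1000 + 298) * 1000 + 229) * 1000 + 840) * 1000 + 346) * 1000 + 740)
    + (n%:R - 100) * (((((((210 * 1000 + 468) * 1000 + 271) * 1000 + 3) * 1000 + 282) * 1000 + 708) * 1000 + 696)
    + (n%:R - 100) * (((((((2 * 1000 + 234) * 1000 + 645) * 1000 + 714) * 1000 + 888) * 1000 + 216) * 1000 + 28)
    + (n%:R - 100) * ((((((15 * 1000 + 805) * 1000 + 270) * 1000 + 524) * 1000 + 882) * 1000 + 832)
    + (n%:R - 100) * (((((71 * 1000 + 810) * 1000 + 373) * 1000 + 283) * 1000 + 500)
    + (n%:R - 100) * ((((190 * 1000 + 186) * 1000 + 939) * 1000 + 19)
    + (n%:R - 100) * ((223 * 1000 + 715) * 1000 + 494))))))))))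
  ((63 * 1000) * 1000).
Qed.

Lemma psum_lt_scaled_succ8 (n : nat) : (100 <= n)%N ->
  psum n 8 < econst * (1 - 1 / (n - 8)%:R) ^+ 8 * sqrt1B_approx (n - 8)%:R * psum n 9.
Proof.
move=> n_ge100; psum_certificate
  (((((((((((3 * 1000 + 313) * 1000 + 934) * 1000 + 367) * 1000 + 470) * 1000 + 368) * 1000 + 788) * 1000 + 61) * 1000 + 682) * 1000 + 726) * 1000 + 400)
    + (n%:R - 100) * ((((((((((355 * 1000 + 653) * 1000 + 116) * 1000 + 303) * 1000 + 518) * 1000 + 15) * 1000 + 887) * 1000 + 828) * 1000 + 925) * 1000 + 200)
    + (n%:R - 100) * ((((((((((17 * 1000 + 157) * 1000 + 825) * 1000 + 443) * 1000 + 97) * 1000 + 86) * 1000 + 477) * 1000 + 638) * 1000 + 77) * 1000 + 4)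
    + (n%:R - 100) * (((((((((490 * 1000 + 26) * 1000 + 64) * 1000 + 406) * 1000 + 528) * 1000 + 892) * 1000 + 674) * 1000 + 95) * 1000 + 752)
    + (n%:R - 100) * (((((((((9 * 1000 + 175) * 1000 + 570) * 1000 + 574) * 1000 + 644) * 1000 + 931) * 1000 + 247) * 1000 + 913) * 1000 + 549)
    + (n%:R - 100) * ((((((((117 * 1000 + 705) * 1000 + 968) * 1000 + 274) * 1000 + 254) * 1000 + 156) * 1000 + 889) * 1000 + 869)
    + (n%:R - 100) * ((((((((1 * 1000 + 47) * 1000 + 680) * 1000 + 50) * 1000 + 20) * 1000 + 621) * 1000 + 587) * 1000 + 584)
    + (n%:R - 100) * (((((((6 * 1000 + 389) * 1000 + 204) * 1000 + 630) * 1000 + 653) * 1000 + 655) * 1000 + 318)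
    + (n%:R - 100) * ((((((25 * 1000 + 550) * 1000 + 245) * 1000 + 515) * 1000 + 673) * 1000 + 281)
    + (n%:R - 100) * (((((60 * 1000 + 502) * 1000 + 775) * 1000 + 877) * 1000 + 701)
    + (n%:R - 100) * (((64 * 1000 + 425) * 1000 + 462) * 1000 + 822)))))))))))
  (((8 * 1000 + 64) * 1000) * 1000).
Qed.

Lemma psum_lt_scaled_succ9 (n : nat) : (100 <= n)%N ->
  psum n 9 < econst * (1 - 1 / (n - 9)%:R) ^+ 9 * sqrt1B_approx (n - 9)%:R * psum n 10.
Proof.
move=> n_ge100; psum_certificate
  (((((((((((18 * 1000 + 669) * 1000 + 187) * 1000 + 590) * 1000 + 196) * 1000 + 508) * 1000 + 649) * 1000 + 578) * 1000 + 347) * 1000 + 200) * 1000)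
    + (n%:R - 100) * (((((((((((2 * 1000 + 220) * 1000 + 105) * 1000 + 298) * 1000 + 891) * 1000 + 722) * 1000 + 971) * 1000 + 128) * 1000 + 379) * 1000 + 10) * 1000)
    + (n%:R - 100) * ((((((((((119 * 1000 + 863) * 1000 + 584) * 1000 + 403) * 1000 + 537) * 1000 + 790) * 1000 + 297) * 1000 + 36) * 1000 + 137) * 1000 + 500)
    + (n%:R - 100) * ((((((((((3 * 1000 + 878) * 1000 + 550) * 1000 + 359) * 1000 + 408) * 1000 + 559) * 1000 + 930) * 1000 + 990) * 1000 + 705) * 1000)
    + (n%:R - 100) * (((((((((83 * 1000 + 580) * 1000 + 308) * 1000 + 381) * 1000 + 935) * 1000 + 921) * 1000 + 129) * 1000 + 663) * 1000 + 125)
    + (n%:R - 100) * (((((((((1 * 1000 + 259) * 1000 + 517) * 1000 + 533) * 1000 + 682) * 1000 + 846) * 1000 + 815) * 1000 + 418) * 1000 + 125)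
    + (n%:R - 100) * ((((((((13 * 1000 + 544) * 1000 + 597) * 1000 + 258) * 1000 + 401) * 1000 + 991) * 1000 + 945) * 1000 + 625)
    + (n%:R - 100) * (((((((103 * 1000 + 946) * 1000 + 473) * 1000 + 984) * 1000 + 786) * 1000 + 618) * 1000 + 125)
    + (n%:R - 100) * ((((((557 * 1000 + 930) * 1000 + 127) * 1000 + 195) * 1000 + 547) * 1000 + 875)
    + (n%:R - 100) * ((((((1 * 1000 + 994) * 1000 + 821) * 1000 + 352) * 1000 + 934) * 1000 + 675)
    + (n%:R - 100) * (((((4 * 1000 + 276) * 1000 + 28) * 1000 + 598) * 1000 + 729)
    + (n%:R - 100) * (((4 * 1000 + 163) * 1000 + 228) * 1000 + 251))))))))))))
  ((226 * 1000 + 800) * 1000).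
Qed.

Lemma psum_lt_scaled_succ10 (n : nat) : (100 <= n)%N ->
  psum n 10 < econst * (1 - 1 / (n - 10)%:R) ^+ 10 * sqrt1B_approx (n - 10)%:R * psum n 11.
Proof.
move=> n_ge100; psum_certificate
  (((((((((((((12 * 1000 + 10) * 1000 + 218) * 1000 + 788) * 1000 + 409) * 1000 + 746) * 1000 + 774) * 1000 + 717) * 1000 + 995) * 1000 + 10) * 1000 + 281) * 1000 + 958) * 1000 + 400)
    + (n%:R - 100) * (((((((((((((1 * 1000 + 569) * 1000 + 701) * 1000 + 974) * 1000 + 502) * 1000 + 499) * 1000 + 858) * 1000 + 287) * 1000 + 665) * 1000 + 136) * 1000 + 182) * 1000 + 478) * 1000 + 880)
    + (n%:R - 100) * ((((((((((((93 * 1000 + 906) * 1000 + 470) * 1000 + 357) * 1000 + 384) * 1000 + 462) * 1000 + 800) * 1000 + 966) * 1000 + 603) * 1000 + 662) * 1000 + 287) * 1000 + 688)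
    + (n%:R - 100) * ((((((((((((3 * 1000 + 400) * 1000 + 592) * 1000 + 145) * 1000 + 880) * 1000 + 9) * 1000 + 790) * 1000 + 276) * 1000 + 358) * 1000 + 467) * 1000 + 306) * 1000 + 468)
    + (n%:R - 100) * (((((((((((83 * 1000 + 25) * 1000 + 755) * 1000 + 178) * 1000 + 733) * 1000 + 128) * 1000 + 225) * 1000 + 252) * 1000 + 502) * 1000 + 543) * 1000 + 214)
    + (n%:R - 100) * (((((((((((1 * 1000 + 439) * 1000 + 899) * 1000 + 24) * 1000 + 46) * 1000 + 114) * 1000 + 299) * 1000 + 310) * 1000 + 188) * 1000 + 321) * 1000 + 265)
    + (n%:R - 100) * ((((((((((18 * 1000 + 189) * 1000 + 759) * 1000 + 315) * 1000 + 53) * 1000 + 883) * 1000 + 934) * 1000 + 301) * 1000 + 154) * 1000 + 104)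
    + (n%:R - 100) * (((((((((168 * 1000 + 655) * 1000 + 468) * 1000 + 386) * 1000 + 520) * 1000 + 640) * 1000 + 211) * 1000 + 636) * 1000 + 69)
    + (n%:R - 100) * (((((((((1 * 1000 + 139) * 1000 + 184) * 1000 + 612) * 1000 + 152) * 1000 + 704) * 1000 + 490) * 1000 + 20) * 1000 + 812)
    + (n%:R - 100) * ((((((((5 * 1000 + 466) * 1000 + 862) * 1000 + 714) * 1000 + 533) * 1000 + 420) * 1000 + 714) * 1000 + 355)
    + (n%:R - 100) * (((((((17 * 1000 + 693) * 1000 + 626) * 1000 + 349) * 1000 + 676) * 1000 + 551) * 1000 + 8)
    + (n%:R - 100) * ((((((34 * 1000 + 678) * 1000 + 394) * 1000 + 559) * 1000 + 123) * 1000 + 763)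
    + (n%:R - 100) * ((((31 * 1000 + 127) * 1000 + 570) * 1000 + 783) * 1000 + 974)))))))))))))
  (((725 * 1000 + 760) * 1000) * 1000).
Qed.

Lemma psum_lt_scaled_succ (n m : nat) : (100 <= n)%N -> (1 <= m)%N -> (m < 11)%N ->
  psum n m < econst * (1 - 1 / (n - m)%:R) ^+ m * sqrt1B_approx (n - m)%:R * psum n m.+1.
Proof.
move=> n_ge100; case: m => [|[|[|[|[|[|[|[|[|[|[|m]]]]]]]]]]] m_ge1 m_lt11.
- exfalso; lia.
- exact: psum_lt_scaled_succ1.
- exact: psum_lt_scaled_succ2.
- exact: psum_lt_scaled_succ3.
- exact: psum_lt_scaled_succ4.
- exact: psum_lt_scaled_succ5.
- exact: psum_lt_scaled_succ6.
- exact: psum_lt_scaled_succ7.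
- exact: psum_lt_scaled_succ8.
- exact: psum_lt_scaled_succ9.
- exact: psum_lt_scaled_succ10.
- exfalso; lia.
Qed.

Lemma psum_ge0 (n m : nat) : 0 <= psum n m.
Proof. by rewrite sumr_ge0 // => k _; rewrite mulr_ge0 ?exprn_ge0 ?divr_ge0. Qed.

Lemma f_psum (n m : nat) : (m < n)%N -> f n m = ((n - m)%:R / n%:R) ^+ n * psum n m.
Proof.
move=> lt_mn; rewrite /f /psum big_distrr /=; apply: eq_big_nat => k /andP[_ lt_km].
have n_neq0 : n%:R != 0 :> rat by rewrite pnatr_eq0 -lt0n (leq_ltn_trans _ lt_mn).
have nm_neq0 : (n - m)%:R != 0 :> rat by rewrite pnatr_eq0 subn_eq0 -ltnNge.
set a : rat := (n - m)%:R / n%:R; set b : rat := m%:R / n%:R.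
have a_neq0 : a != 0 by rewrite mulf_neq0 ?invr_eq0.
have -> : 1 - b = a by rewrite /a /b natrB ?(ltnW lt_mn) //; field.
have -> : m%:R / (n - m)%:R = b / a by rewrite /a /b; field; rewrite n_neq0 nm_neq0.
have -> : a ^+ n = a ^+ (n - k) * a ^+ k.
  by rewrite -exprD subnK // ltnW // (ltn_trans lt_km).
by rewrite [(b / a) ^+ k]expr_div_n; field; rewrite expf_neq0.
Qed.

Theorem lemma4 (n m : nat) :
  (100 <= n)%N -> (1 <= m)%N -> (m < 11)%N -> f n m < f n m.+1.
Proof.
move=> n_ge100 m_ge1 m_lt11.
rewrite !f_psum; try lia.
have n_neq0 : n%:R != 0 :> rat by rewrite pnatr_eq0; lia.
have nm_neq0 : (n - m)%:R != 0 :> rat by rewrite pnatr_eq0; lia.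
have -> : (n - m.+1)%:R / n%:R = (n - m)%:R / n%:R * (1 - 1 / (n - m)%:R) :> rat.
  rewrite subnS -subn1 natrB; last lia.
  by field; rewrite n_neq0 nm_neq0.
rewrite [in X in _ < X]exprMn -mulrA ltr_pM2l; last first.
  by rewrite exprn_gt0 // divr_gt0 // ltr0n; lia.
apply: lt_le_trans (psum_lt_scaled_succ _ _ n_ge100 m_ge1 m_lt11) _.
apply: ler_wpM2r; first exact: psum_ge0.
have := @expr1B_inv_ge rat (n - m) m; rewrite subnK; last lia.
by apply; lia.
Qed.
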